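(* Let $(\varphi_\alpha)_{\alpha>0}$ be a non-linear regularizing filter satisfying Assumption C with parameter $\gamma$ and numbers $\ell_\alpha\in(0,1)$. Then the family $(\operatorname{prox}_{\gamma\mathcal{R}_\alpha})_{\alpha>0}$ of operators on $\ell^2(\Lambda)$ is an admissible family of denoisers.
   Context: $\Lambda$ is an at most countable index set and $\kappa=(\kappa_\lambda)_{\lambda\in\Lambda}\in(0,\infty)^\Lambda$ with $\sup_\lambda\kappa_\lambda<\infty$. A non-linear regularizing filter is a family $(\varphi_\alpha)_{\alpha>0}$ of functions $\varphi_\alpha\colon(0,\infty)\times\mathbb{R}\to\mathbb{R}$ such that for all $\alpha,\kappa>0$: (F1) $\varphi_\alpha(\kappa,\cdot)$ is non-decreasing; (F2) $\varphi_\alpha(\kappa,\cdot)$ is 1-Lipschitz; (F3) $\varphi_\alpha(\kappa,0)=0$; (F4) $\lim_{\alpha\to0}\varphi_\alpha(\kappa,c)=c$ for all $c\in\mathbb{R}$. $\kappa$-regularizer: for each $\alpha>0,\lambda\in\Lambda$ let $s_{\alpha,\lambda}\colon\mathbb{R}\to\mathbb{R}\cup\{\infty\}$ be proper, convex, lower semi-continuous with $s_{\alpha,\lambda}\ge s_{\alpha,\lambda}(0)=0$ and $\varphi_\alpha(\kappa_\lambda,\cdot)=\operatorname{prox}_{s_{\alpha,\lambda}}$ (such functions exist); $\mathcal{R}_\alpha((x_\lambda)_\lambda):=\sum_\lambda s_{\alpha,\lambda}(\kappa_\lambda x_\lambda)$ on $\ell^2(\Lambda)$. $\operatorname{prox}_f(x)=\operatorname{argmin}_y\tfrac12\|x-y\|^2+f(y)$.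 Assumption C: $\gamma\in(0,1/\sup_\lambda\kappa_\lambda^2)$ and for every $\alpha>0$ there is $\ell_\alpha\in(0,1)$ such that (C1) for all $\lambda$, $\varphi_\alpha(\kappa_\lambda,\cdot)$ is Lipschitz with constant at most $\frac{\gamma\kappa_\lambda^2\ell_\alpha}{1-\ell_\alpha(1-\gamma\kappa_\lambda^2)}$; (C2) there exists a constant $C\in[1,\infty)$ such that for all $\alpha>0$ with $1/(1-\ell_\alpha)\ge C$, all $\lambda\in\Lambda$ and all $x\in\mathbb{R}$: $|\varphi_\alpha(\kappa_\lambda,x)|\ge\frac{\gamma\kappa_\lambda^2(1-C(1-\ell_\alpha))}{1-(1-C(1-\ell_\alpha))(1-\gamma\kappa_\lambda^2)}|x|$. Admissible family of denoisers: a family $(\mathbf{D}_\alpha)_{\alpha>0}$ of operators $\mathbf{D}_\alpha\colon H\to H$ on a Hilbert space $H$ such that, with $\mathbb{E}:=\bigcup_{\alpha>0}\operatorname{ran}(\mathbf{D}_\alpha)$: (D1) $\operatorname{Lip}(\mathbf{D}_\alpha)<1$ for all $\alpha>0$; (D2) $\mathbf{D}_\alpha(x)\to x$ as $\alpha\to0$ for all $x\in\mathbb{E}$; (D3) for every bounded $B\subseteq\mathbb{E}$ and every $z\in H$, $\sup_{x\in B}\langle\mathbf{D}_\alpha(x)-x,z\rangle\to0$ as $\alpha\to0$; (D4) for every $x\in\mathbb{E}$ there is $M_x<\infty$ with $\|x-\mathbf{D}_\alpha(x)\|/(1-\operatorname{Lip}(\mathbf{D}_\alpha))\le M_x$ for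 all $\alpha>0$. Here $\operatorname{Lip}$ denotes the optimal Lipschitz constant. *)

From HB Require Import structures.
From mathcomp Require Import all_boot all_order all_algebra.
From mathcomp Require Import all_classical all_reals all_analysis.
Set Implicit Arguments. Unset Strict Implicit. Unset Printing Implicit Defensive.
Import Order.TTheory GRing.Theory Num.Theory.
Import numFieldNormedType.Exports.
Local Open Scope classical_set_scope.
Local Open Scope ring_scope.

Section Defs.
Context {R : realType} {Lam : countType}.

(* non-linear regularizing filter: phi alpha kappa x ; (F1)-(F4) *)
Definition nl_reg_filter (phi : R -> R -> R -> R) : Prop :=
  forall a k : R, 0 < a -> 0 < k ->
    (forall x y, x <= y -> phi a k x <= phi a k y) /\
    (forall x y, `|phi a k x - phi a k y| <= `|x - y|) /\
    phi a k 0 = 0 /\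
    (forall c : R, (fun b => phi b k c) @ 0^'+ --> c).

Definition econvex (f : R -> \bar R) : Prop :=
  forall (t a b : R), (0 <= t <= 1)%R ->
    (f (t * a + (1 - t) * b)%R <= t%:E * f a + (1 - t)%:E * f b)%E.

Definition elsc (f : R -> \bar R) : Prop :=
  forall (x c : R), (c%:E < f x)%E -> \forall y \near x, (c%:E < f y)%E.

Definition eproper (f : R -> \bar R) : Prop :=
  (forall x, f x != -oo%E) /\ exists x, f x \is a fin_num.

Definition is_prox1 (f : R -> \bar R) (p : R -> R) : Prop :=
  forall x y : R,
    ((2^-1 * (x - p x) ^+ 2)%:E + f (p x) <= (2^-1 * (x - y) ^+ 2)%:E + f y)%E.

Definition l2sq (x : Lam -> R) : \bar R := \esum_(i in [set: Lam]) ((x i) ^+ 2)%:E.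
Definition in_l2 (x : Lam -> R) : Prop := (l2sq x < +oo)%E.
Definition l2norm (x : Lam -> R) : R := Num.sqrt (fine (l2sq x)).
(* <x,y> = sum_i x_i y_i, the (absolutely convergent) unordered sum *)
Definition l2inner (x y : Lam -> R) : R :=
  fine (\esum_(i in [set: Lam]) (Num.max (x i * y i) 0)%:E)
  - fine (\esum_(i in [set: Lam]) (Num.max (- (x i * y i)) 0)%:E).
Definition l2sub (x y : Lam -> R) : Lam -> R := fun i => x i - y i.

Definition is_prox_l2 (F : (Lam -> R) -> \bar R) (P : (Lam -> R) -> (Lam -> R)) : Prop :=
  forall x, in_l2 x ->
    in_l2 (P x) /\
    forall y, in_l2 y ->
      ((2^-1 * l2norm (l2sub x (P x)) ^+ 2)%:E + F (P x)
        <= (2^-1 * l2norm (l2sub x y) ^+ 2)%:E + F y)%E.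

Definition kappa_reg (s : R -> Lam -> R -> \bar R) (kappa : Lam -> R) (a : R)
  (x : Lam -> R) : \bar R := \esum_(l in [set: Lam]) s a l (kappa l * x l).

(* optimal Lipschitz constant on ell^2 (in \bar R: +oo if not Lipschitz) *)
Definition lip_l2 (D : (Lam -> R) -> (Lam -> R)) : \bar R :=
  ereal_inf [set L%:E | L in [set L : R | 0 <= L /\
     forall x y, in_l2 x -> in_l2 y ->
       l2norm (l2sub (D x) (D y)) <= L * l2norm (l2sub x y)]].

Definition den_range (D : R -> (Lam -> R) -> (Lam -> R)) : set (Lam -> R) :=
  [set y | exists a, 0 < a /\ exists x, in_l2 x /\ y = D a x].

Definition admissible_denoisers (D : R -> (Lam -> R) -> (Lam -> R)) : Prop :=
  (forall a, 0 < a -> forall x, in_l2 x -> in_l2 (D a x)) /\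
  (forall a, 0 < a -> (lip_l2 (D a) < 1%:E)%E) /\
  (forall x, den_range D x ->
     (fun a => l2norm (l2sub (D a x) x)) @ 0^'+ --> 0) /\
  (forall B : set (Lam -> R), B `<=` den_range D -> B !=set0 ->
     (exists r : R, forall x, B x -> l2norm x <= r) ->
     forall z, in_l2 z ->
       (fun a => ereal_sup [set (l2inner (l2sub (D a x) x) z)%:E | x in B])
         @ 0^'+ --> 0%E) /\
  (forall x, den_range D x -> exists M : R, forall a, 0 < a ->
     l2norm (l2sub x (D a x)) / (1 - fine (lip_l2 (D a))) <= M).

End Defs.

From HB Require Import structures.
From mathcomp Require Import all_boot all_order all_algebra.
From mathcomp Require Import all_classical all_reals all_analysis.
From mathcomp Require Import ring lra.
Import Order.TTheory GRing.Theory Num.Theory.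
Import numFieldNormedType.Exports.
Local Open Scope classical_set_scope.
Local Open Scope ring_scope.

(* The functional gamma R_a is separable, so its proximal map acts coordinatewise:
   the l-th coordinate of prox(x) is phi_a(kappa_l, w) / kappa_l, where w solves
   kappa_l x_l = t w + (1 - t) phi_a(kappa_l, w) with t = gamma kappa_l^2.
   Through this relation (C1) makes every coordinate map ell_a-Lipschitz, which
   gives (D1); (C2) bounds the coordinate residual by C (1 - ell_a) |x_l|, which
   gives (D4) since 1 - Lip >= 1 - ell_a; and (F4) drives every coordinate
   residual to 0 while it stays dominated by |x_l|, so splitting the l^2 sums
   into a finite head and a small tail gives (D2) and (D3). *)

Lemma ler_Nnorm_norm {R : realDomainType} (x : R) : - `|x| <= x <= `|x|.
Proof. by rewrite -ler_norml. Qed.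

Section ScalarProx.
Context {R : realType}.
Variables (s : R -> \bar R) (phi : R -> R).
Hypothesis s0 : s 0 = 0%E.
Hypothesis s_ge_s0 : forall x, (s 0 <= s x)%E.
Hypothesis s_convex : econvex s.
Hypothesis phi_prox : is_prox1 s phi.

Lemma regularizer_ge0 x : (0 <= s x)%E.
Proof. by rewrite -s0. Qed.

Lemma prox1_fin_num w : s (phi w) \is a fin_num.
Proof.
have := phi_prox w 0; rewrite s0 adde0 => le_w0.
rewrite ge0_fin_numE ?regularizer_ge0 //.
apply: le_lt_trans (ltry (2^-1 * (w - 0) ^+ 2)).
by apply: le_trans le_w0; apply: leeDr; rewrite lee_fin mulr_ge0 ?sqr_ge0.
Qed.

(* Comparing with the candidate phi w + e (z - phi w) and letting e -> 0
   shows that w - phi w is a subgradient of s at phi w. *)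
Lemma prox1_subgradient w z :
  ((fine (s (phi w)) + (w - phi w) * (z - phi w))%:E <= s z)%E.
Proof.
set y := phi w; set sy := fine (s y).
have esy : s y = sy%:E by rewrite /sy fineK ?prox1_fin_num.
have := regularizer_ge0 z; case Ez : (s z) => [sz| |] // _; last by rewrite leey.
rewrite lee_fin; set h := z - y.
have step e : 0 < e <= 1 -> sy + (w - y) * h <= sz + e * h ^+ 2 / 2.
  move=> /andP[e0 e1].
  have := s_convex e z y; rewrite (ltW e0) e1 => /(_ isT) cvx.
  rewrite Ez esy -!EFinM -EFinD in cvx.
  have := le_trans (phi_prox w (e * z + (1 - e) * y)) (leeD2l _ cvx).
  rewrite esy -!EFinD lee_fin (_ : e * z + (1 - e) * y = y + e * h); last first.
    by rewrite /h; ring.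
  move=> opt.
  have : e * (sy + (w - y) * h - (sz + e * h ^+ 2 / 2)) <= 0.
    suff -> : e * (sy + (w - y) * h - (sz + e * h ^+ 2 / 2)) =
      (2^-1 * (w - y) ^+ 2 + sy) - (2^-1 * (w - (y + e * h)) ^+ 2 + (e * sz + (1 - e) * sy)).
      by rewrite subr_le0.
    by field.
  by rewrite pmulr_rle0 // subr_le0.
apply/ler_addgt0Pr => e e0.
have h2 := sqr_ge0 h.
set e' := 2 * e / (2 * e + h ^+ 2).
have e'0 : 0 < e' by apply: divr_gt0; lra.
have e'1 : e' <= 1 by rewrite ler_pdivrMr ?mul1r; lra.
apply: le_trans (step e' (introT andP (conj e'0 e'1))) _; rewrite lerD2l.
have -> : e' * h ^+ 2 / 2 = e * (h ^+ 2 / (2 * e + h ^+ 2)).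
  by rewrite /e'; field; rewrite gt_eqF //; lra.
by rewrite ler_piMr ?divr_ge0 ?ler_pdivrMr ?mul1r //; lra.
Qed.

(* q = phi w / k is the proximal point of z |-> g s (k z) at u: the subgradient
   inequality at k q, scaled by g, is the three-point inequality. *)
Lemma prox_scaled_three_point g k u w z : 0 < g -> 0 < k ->
  k * u = g * k ^+ 2 * w + (1 - g * k ^+ 2) * phi w ->
  ((2^-1 * (u - phi w / k) ^+ 2)%:E + g%:E * s (k * (phi w / k))
     + (2^-1 * (z - phi w / k) ^+ 2)%:E
   <= (2^-1 * (u - z) ^+ 2)%:E + g%:E * s (k * z))%E.
Proof.
move=> g0 k0 ku; set q := phi w / k.
have kq : k * q = phi w by rewrite /q mulrC divfK ?gt_eqF.
rewrite kq; set sy := fine (s (phi w)).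
have esy : s (phi w) = sy%:E by rewrite /sy fineK ?prox1_fin_num.
have := regularizer_ge0 (k * z); case Ez : (s (k * z)) => [sz| |] // _; last first.
  by rewrite gt0_muley ?lte_fin // addey // leey.
have sub := prox1_subgradient w (k * z); rewrite Ez -/sy lee_fin -kq in sub.
rewrite esy -!EFinM -!EFinD lee_fin.
have uq : u - q = g * k * (w - k * q).
  by apply: (mulfI (lt0r_neq0 k0)); rewrite mulrBr ku -kq; ring.
have : g * (sy + (w - k * q) * (k * z - k * q)) <= g * sz by rewrite ler_pM2l.
have -> : g * (sy + (w - k * q) * (k * z - k * q)) = g * sy + (u - q) * (z - q).
  by rewrite uq; ring.
have : 2^-1 * (u - q) ^+ 2 + 2^-1 * (z - q) ^+ 2 - 2^-1 * (u - z) ^+ 2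
   = (u - q) * (z - q) by field.
lra.
Qed.

End ScalarProx.

Lemma lipschitz1_continuous {R : realType} (f : R -> R) :
  (forall x y, `|f x - f y| <= `|x - y|) -> continuous f.
Proof.
move=> f_lip x; apply/cvgrPdist_le => e e0.
near=> y; apply: le_trans (f_lip x y) _; near: y.
exact: (@cvgr_dist_le _ _ _ (nbhs x) _ id x cvg_id e e0).
Unshelve. all: by end_near.
Qed.

Section Blend.
Context {R : realType}.
Variable phi : R -> R.
Hypothesis phi_mono : forall x y, x <= y -> phi x <= phi y.
Hypothesis phi_lip1 : forall x y, `|phi x - phi y| <= `|x - y|.
Hypothesis phi0 : phi 0 = 0.

Definition blend t w := t * w + (1 - t) * phi w.

Lemma blend_sub_phi t w : blend t w - phi w = t * (w - phi w).
Proof. by rewrite /blend; ring. Qed.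

Lemma phi_ge0_le {w} : 0 <= w -> 0 <= phi w <= w.
Proof.
move=> w0; have := phi_mono _ _ w0; rewrite phi0 => -> /=.
have := phi_lip1 w 0; rewrite phi0 !subr0 => /(le_trans (ler_norm _)).
by rewrite ger0_norm.
Qed.

Lemma phi_le0_ge {w} : w <= 0 -> w <= phi w <= 0.
Proof.
move=> w0; have := phi_mono _ _ w0; rewrite phi0 => ->; rewrite andbT.
have := phi_lip1 w 0; rewrite phi0 !subr0 (ler0_norm w0).
by have /andP[? ?] := ler_Nnorm_norm (phi w); lra.
Qed.

Lemma norm_id_sub_phi w : `|w - phi w| = `|w| - `|phi w|.
Proof.
have [w0|w0] := leP 0 w.
  have /andP[y0 yw] := phi_ge0_le w0.
  by rewrite !ger0_norm // subr_ge0.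
have /andP[yw y0] := phi_le0_ge (ltW w0).
by rewrite !ler0_norm ?subr_le0 // ?opprB ?opprK; [lra | exact: ltW].
Qed.

Lemma norm_phi_le w : `|phi w| <= `|w|.
Proof. by rewrite -subr_ge0 -norm_id_sub_phi. Qed.

Lemma norm_blend t w : 0 <= t <= 1 -> `|blend t w| = t * `|w| + (1 - t) * `|phi w|.
Proof.
move=> /andP[t0 t1]; rewrite /blend.
have [w0|w0] := leP 0 w.
  have /andP[y0 _] := phi_ge0_le w0.
  by rewrite !ger0_norm // addr_ge0 // mulr_ge0 // subr_ge0.
have /andP[_ y0] := phi_le0_ge (ltW w0).
rewrite (ltr0_norm w0) (ler0_norm y0) ler0_norm; first by ring.
by nra.
Qed.

Lemma blend_surj t X : 0 < t < 1 -> exists w, blend t w = X.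
Proof.
move=> /andP[t0 t1].
have blend_cont : continuous (blend t).
  apply: lipschitz1_continuous => a b.
  rewrite (_ : blend t a - blend t b = t * (a - b) + (1 - t) * (phi a - phi b));
    last by rewrite /blend; ring.
  have t1' : 0 <= 1 - t by lra.
  apply: le_trans (ler_normD _ _) _.
  rewrite !normrM (gtr0_norm t0) (ger0_norm t1').
  by have := ler_wpM2l t1' (phi_lip1 a b); lra.
set b := `|X| / t.
have b0 : 0 <= b by rewrite divr_ge0 //; lra.
have tb : t * b = `|X| by rewrite /b mulrC divfK ?gt_eqF.
have /andP[? ?] := ler_Nnorm_norm X.
have [c _ <-] : exists2 c, c \in `[- b, b] & blend t c = X.
  apply: IVT; [lra | exact: continuous_subspaceT |].
  have /andP[phib _] := phi_ge0_le b0.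
  have /andP[_ phiNb] : - b <= phi (- b) <= 0 by apply: phi_le0_ge; lra.
  have : 0 <= (1 - t) * phi b by rewrite mulr_ge0 //; lra.
  have : (1 - t) * phi (- b) <= 0 by rewrite mulr_ge0_le0 //; lra.
  move=> ? ?; have lo : blend t (- b) <= X by rewrite /blend mulrN tb; lra.
  have hi : X <= blend t b by rewrite /blend tb; lra.
  by rewrite ge_min le_max lo hi orbT.
by exists c.
Qed.

Lemma blend_norm_bounds t w : 0 < t < 1 ->
  `|phi w| <= `|blend t w| /\ `|blend t w - phi w| <= `|blend t w|.
Proof.
move=> /andP[t0 t1]; rewrite blend_sub_phi normrM (gtr0_norm t0) norm_id_sub_phi.
rewrite norm_blend ?(ltW t0) ?(ltW t1) //.
by have := norm_phi_le w; have := normr_ge0 (phi w); split; nra.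
Qed.

Lemma blend_lipschitz t l c w1 w2 : 0 < t < 1 -> 0 < l < 1 ->
  (forall a b, `|phi a - phi b| <= c * `|a - b|) ->
  c <= t * l / (1 - l * (1 - t)) ->
  `|phi w1 - phi w2| <= l * `|blend t w1 - blend t w2|.
Proof.
move=> /andP[t0 t1] /andP[l0 l1] phi_lip c_le.
wlog w21 : w1 w2 / w2 <= w1.
  move=> hwlog; have [|/ltW] := leP w2 w1; first exact: hwlog.
  by move=> /hwlog; rewrite distrC [`|blend t w2 - _|]distrC.
have D0 : 0 < 1 - l * (1 - t) by nra.
have dy0 : 0 <= phi w1 - phi w2 by rewrite subr_ge0 phi_mono.
have dw0 : 0 <= w1 - w2 by rewrite subr_ge0.
have dyc := phi_lip w1 w2; rewrite (ger0_norm dy0) (ger0_norm dw0) in dyc.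
have cD : c * (1 - l * (1 - t)) <= t * l by rewrite -ler_pdivlMr.
rewrite (_ : blend t w1 - blend t w2 = t * (w1 - w2) + (1 - t) * (phi w1 - phi w2));
  last by rewrite /blend; ring.
rewrite (ger0_norm dy0) ger0_norm; last by rewrite addr_ge0 // mulr_ge0 //; lra.
set dy := phi w1 - phi w2 in dy0 dyc *; set dw := w1 - w2 in dw0 dyc *.
have := ler_wpM2r (ltW D0) dyc; have := ler_wpM2r dw0 cD; nra.
Qed.

Lemma blend_sub_phi_le t m w : 0 < t < 1 -> 0 <= m < 1 ->
  (forall v, t * m / (1 - m * (1 - t)) * `|v| <= `|phi v|) ->
  `|blend t w - phi w| <= (1 - m) * `|blend t w|.
Proof.
move=> /andP[t0 t1] /andP[m0 m1] phi_low.
have D0 : 0 < 1 - m * (1 - t) by nra.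
have := phi_low w; rewrite mulrAC ler_pdivrMr //.
rewrite blend_sub_phi normrM (gtr0_norm t0) norm_id_sub_phi.
rewrite norm_blend ?(ltW t0) ?(ltW t1) //.
by have := normr_ge0 (phi w); have := normr_ge0 w; nra.
Qed.

Lemma blend_sub_phi_le_bound t B w : 0 < t < 1 -> 0 <= B ->
  `|blend t w| <= t * B ->
  `|blend t w - phi w| <= t * (`|B - phi B| + `|- B - phi (- B)|).
Proof.
move=> /andP[t0 t1] B0 wB.
have wB' : `|w| <= B.
  rewrite -(ler_pM2l t0); apply: le_trans wB.
  rewrite norm_blend ?(ltW t0) ?(ltW t1) //.
  by have := normr_ge0 (phi w); nra.
rewrite blend_sub_phi normrM (gtr0_norm t0) ler_pM2l //.
have id_sub_mono a b : a <= b -> a - phi a <= b - phi b.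
  move=> ab; have := le_trans (ler_norm _) (phi_lip1 b a).
  by rewrite ger0_norm ?subr_ge0 //; lra.
move: wB'; rewrite ler_norml => /andP[wl wr].
have := id_sub_mono _ _ wl; have := id_sub_mono _ _ wr.
have /andP[? ?] := ler_Nnorm_norm (B - phi B).
have /andP[? ?] := ler_Nnorm_norm (- B - phi (- B)).
rewrite ler_norml; lra.
Qed.

End Blend.

Lemma sqr_normr {R : realDomainType} (x : R) : `|x| ^+ 2 = x ^+ 2.
Proof. exact: real_normK (num_real x). Qed.

Section EsumNonneg.
Context {R : realType} {T : choiceType}.
Implicit Types (f : T -> R) (F : set T).

Lemma ge0_esumZl (I : set T) (r : R) (a : T -> \bar R) :
  0 <= r -> (forall i, (0 <= a i)%E) ->
  (r%:E * (\esum_(i in I) a i) = \esum_(i in I) (r%:E * a i))%E.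
Proof.
move=> r0 a0; rewrite /esum -ereal_supZl //; last first.
  apply/set0P; exists 0%E; exists set0; first exact: fsets_set0.
  by rewrite fsbig_set0.
congr ereal_sup; apply/seteqP; split => z /=.
  by move=> [_ [A hA <-] <-]; exists A => //; rewrite ge0_mule_fsumr.
move=> [A hA <-]; exists (\sum_(i \in A) a i)%E; first by exists A.
by rewrite ge0_mule_fsumr.
Qed.

Lemma esum_setTID {f F} : (forall i, 0 <= f i) -> finite_set F ->
  \esum_(i in [set: T]) (f i)%:E =
  (\sum_(i \in F) (f i)%:E + \esum_(i in ~` F) (f i)%:E)%E.
Proof.
move=> f0 finF; rewrite (esumID F) => [|i _]; last by rewrite lee_fin.
by rewrite !setTI esum_fset // => i _; rewrite lee_fin.
Qed.

Lemma esum_setC_le {f} F : (forall i, 0 <= f i) ->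
  (\esum_(i in ~` F) (f i)%:E <= \esum_(i in [set: T]) (f i)%:E)%E.
Proof.
move=> f0; rewrite [X in (_ <= X)%E](esumID F) => [|i _]; last by rewrite lee_fin.
by rewrite !setTI leeDr //; apply: esum_ge0 => i _; rewrite lee_fin.
Qed.

Lemma esum_split_le {f F A B} : (forall i, 0 <= f i) -> finite_set F ->
  (\sum_(i \in F) (f i)%:E <= A%:E)%E -> (\esum_(i in ~` F) (f i)%:E <= B%:E)%E ->
  (\esum_(i in [set: T]) (f i)%:E <= (A + B)%:E)%E.
Proof. by move=> f0 finF hA hB; rewrite (esum_setTID f0 finF) EFinD leeD. Qed.

Lemma esum_tail_le {f eta} : (forall i, 0 <= f i) ->
  (\esum_(i in [set: T]) (f i)%:E < +oo)%E -> 0 < eta ->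
  exists2 F, finite_set F & (\esum_(i in ~` F) (f i)%:E <= eta%:E)%E.
Proof.
move=> f0 fin_sum eta0; set S := \esum_(i in [set: T]) (f i)%:E.
have S0 : (0 <= S)%E by apply: esum_ge0 => i _; rewrite lee_fin.
have Sfin : S \is a fin_num by rewrite ge0_fin_numE.
have : (S - eta%:E < S)%E by rewrite -(fineK Sfin) -EFinB lte_fin; lra.
move=> /ereal_sup_gt[_ [F [finF _] <-] hF].
exists F => //; have := esum_setTID f0 finF; rewrite -/S.
set A := (\sum_(i \in F) (f i)%:E)%E in hF *.
set B := \esum_(i in ~` F) (f i)%:E => eS.
have A0 : (0 <= A)%E by apply: fsume_ge0 => i _; rewrite lee_fin.
have B0 : (0 <= B)%E by apply: esum_ge0 => i _; rewrite lee_fin.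
have Afin : A \is a fin_num by rewrite ge0_fin_numE // (le_lt_trans _ fin_sum) // -/S eS leeDl.
have Bfin : B \is a fin_num by rewrite ge0_fin_numE // (le_lt_trans _ fin_sum) // -/S eS leeDr.
move: hF eS; rewrite -(fineK Afin) -(fineK Bfin) -(fineK Sfin) -EFinB -EFinD.
by rewrite lte_fin lee_fin => hF eS; have := EFin_inj eS; lra.
Qed.

End EsumNonneg.

Section NearSum.
Context {R : realType} {T : Type} {I : choiceType} {F : set_system T} {FF : Filter F}.

Lemma near_fsum_le {b : T -> I -> R} {D : set I} : finite_set D ->
  (forall i e, 0 < e -> \forall a \near F, b a i <= e) ->
  forall e, 0 < e -> \forall a \near F, (\sum_(i \in D) (b a i)%:E <= e%:E)%E.
Proof.
move=> finD hb e e0.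
suff : \forall a \near F, \sum_(i <- finmap.enum_fset (fset_set D)) b a i <= e.
  by apply: filterS => a h; rewrite fsbig_finite // sumEFin lee_fin.
elim: (finmap.enum_fset _) e e0 => [|i r IH] e e0.
  by apply: nearW => a; rewrite big_nil ltW.
have e2 : 0 < e / 2 by rewrite divr_gt0.
apply: filterS2 (hb i _ e2) (IH _ e2) => a h1 h2.
by rewrite big_cons; lra.
Qed.

Lemma near_scale_le {b : T -> I -> R} {c : I -> R} : (forall i, 0 <= c i) ->
  (forall i e, 0 < e -> \forall a \near F, b a i <= e) ->
  forall i e, 0 < e -> \forall a \near F, c i * b a i <= e.
Proof.
move=> c0 hb i e e0.
have c1 : 0 < c i + 1 by have := c0 i; lra.
apply: filterS (hb i _ (divr_gt0 e0 c1)) => a h.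
apply: le_trans (ler_wpM2l (c0 i) h) _.
by rewrite mulrA ler_pdivrMr //; have := c0 i; nra.
Qed.

Lemma cvge0_sandwich (f : T -> \bar R) :
  (forall e, 0 < e -> \forall a \near F, ((- e)%:E <= f a <= e%:E)%E) ->
  f @ F --> 0%E.
Proof.
have fin a e : ((- e)%:E <= f a <= e%:E)%E -> f a \is a fin_num.
  by move=> /andP[h1 h2]; rewrite fin_numElt (lt_le_trans (ltNyr _) h1) (le_lt_trans h2 (ltry _)).
move=> h; apply: cvg_EFin; first exact: filterS (fun a => fin a 1) (h 1 ltr01).
apply/cvgr0Pnorm_le => e e0; apply: filterS (h e e0) => a hfa.
by move: (hfa); rewrite -(fineK (fin _ _ hfa)) !lee_fin /= ler_norml.
Qed.

End NearSum.

Section L2.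
Context {R : realType} {Lam : countType}.
Implicit Types (x y u v z : Lam -> R).

Lemma l2sq_ge0 x : (0 <= l2sq x)%E.
Proof. by apply: esum_ge0 => i _; rewrite lee_fin sqr_ge0. Qed.

Lemma l2sq_fin_num {x} : in_l2 x -> l2sq x \is a fin_num.
Proof. by move=> h; rewrite ge0_fin_numE // l2sq_ge0. Qed.

Lemma l2sqE {x} : in_l2 x -> l2sq x = (l2norm x ^+ 2)%:E.
Proof.
by move=> h; rewrite /l2norm sqr_sqrtr ?fine_ge0 ?l2sq_ge0 // fineK // l2sq_fin_num.
Qed.

Lemma l2norm_ge0 x : 0 <= l2norm x.
Proof. exact: sqrtr_ge0. Qed.

Lemma l2norm_le_sqr x e : in_l2 x -> 0 <= e -> (l2sq x <= (e ^+ 2)%:E)%E ->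
  l2norm x <= e.
Proof.
move=> hx e0; rewrite l2sqE // lee_fin => le_sq.
by rewrite -(ler_pXn2r (n := 2)) ?nnegrE ?l2norm_ge0.
Qed.

Lemma in_l2_esum_le x (c : Lam -> R) :
  (forall l, (x l) ^+ 2 <= c l) -> (\esum_(l in [set: Lam]) (c l)%:E < +oo)%E -> in_l2 x.
Proof. by move=> le_xc; apply: le_lt_trans; apply: le_esum => l _; rewrite lee_fin. Qed.

Lemma l2sq_le_scale {u v c} : 0 <= c -> (forall l, `|u l| <= c * `|v l|) ->
  (l2sq u <= (c ^+ 2)%:E * l2sq v)%E.
Proof.
move=> c0 h; rewrite /l2sq ge0_esumZl ?sqr_ge0 //; last by move=> i; rewrite lee_fin sqr_ge0.
apply: le_esum => i _; rewrite -EFinM lee_fin -(sqr_normr (u i)) -(sqr_normr (v i)).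
by have := h i; have := normr_ge0 (u i); have := normr_ge0 (v i); nra.
Qed.

Lemma in_l2_le {u v c} : 0 <= c -> in_l2 v -> (forall l, `|u l| <= c * `|v l|) ->
  in_l2 u.
Proof.
move=> c0 hv h; rewrite /in_l2; apply: le_lt_trans (l2sq_le_scale c0 h) _.
by rewrite -(fineK (l2sq_fin_num hv)) -EFinM ltry.
Qed.

Lemma l2norm_le {u v c} : 0 <= c -> in_l2 v -> (forall l, `|u l| <= c * `|v l|) ->
  l2norm u <= c * l2norm v.
Proof.
move=> c0 hv h; apply: l2norm_le_sqr; [exact: in_l2_le hv h | by rewrite mulr_ge0 ?l2norm_ge0 |].
by rewrite exprMn EFinM -l2sqE //; exact: l2sq_le_scale.
Qed.

Lemma in_l2_sub {x y} : in_l2 x -> in_l2 y -> in_l2 (l2sub x y).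
Proof.
move=> hx hy; apply: (@in_l2_esum_le _ (fun l => 2 * x l ^+ 2 + 2 * y l ^+ 2)).
  by move=> l; rewrite /l2sub; have := sqr_ge0 (x l + y l); nra.
under eq_esum do rewrite EFinD !EFinM.
rewrite esumD; try by move=> i _; rewrite -EFinM lee_fin mulr_ge0 // sqr_ge0.
rewrite -!ge0_esumZl //; try by move=> i; rewrite lee_fin sqr_ge0.
rewrite -/(l2sq x) -/(l2sq y) -(fineK (l2sq_fin_num hx)) -(fineK (l2sq_fin_num hy)).
by rewrite -!EFinM -EFinD ltry.
Qed.

Lemma coord_le_l2norm x l : in_l2 x -> `|x l| <= l2norm x.
Proof.
move=> hx; rewrite -(ler_pXn2r (n := 2)) ?nnegrE ?l2norm_ge0 //.
rewrite -lee_fin -l2sqE // sqr_normr; apply: esum_ge.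
by exists [set l]; rewrite ?fsbig_set1 //; split => //; exact: finite_set1.
Qed.

Lemma l2inner_le u v M :
  (\esum_(i in [set: Lam]) (`|u i * v i|)%:E <= M%:E)%E -> `|l2inner u v| <= M.
Proof.
move=> h; rewrite /l2inner.
set P := \esum_(i in _) _; set N := \esum_(i in _) _.
have [P0 N0] : (0 <= P)%E /\ (0 <= N)%E.
  by split; apply: esum_ge0 => i _; rewrite lee_fin le_max lexx orbT.
have [PM NM] : (P <= M%:E)%E /\ (N <= M%:E)%E.
  split; apply: le_trans h; apply: le_esum => i _; rewrite lee_fin ge_max normr_ge0 andbT.
    by have /andP[] := ler_Nnorm_norm (u i * v i).
  by have /andP[] := ler_Nnorm_norm (u i * v i); lra.
have Pf : P \is a fin_num by rewrite ge0_fin_numE // (le_lt_trans PM) ?ltry.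
have Nf : N \is a fin_num by rewrite ge0_fin_numE // (le_lt_trans NM) ?ltry.
move: P0 N0 PM NM; rewrite -(fineK Pf) -(fineK Nf) !lee_fin => P0 N0 PM NM.
by rewrite ler_norml; apply/andP; split; lra.
Qed.

(* Weighted AM-GM: [|x z| <= d/2 x^2 + z^2/(2d)]. *)
Lemma esum_setC_mul_le {x z} {F : set Lam} {r d eta} :
  in_l2 x -> l2norm x <= r -> 0 < d ->
  (\esum_(l in ~` F) (z l ^+ 2)%:E <= eta%:E)%E ->
  (\esum_(l in ~` F) (`|x l| * `|z l|)%:E <= (d / 2 * r ^+ 2 + (2 * d)^-1 * eta)%:E)%E.
Proof.
move=> hx xr d0 hz.
have amgm a b : a * b <= d / 2 * a ^+ 2 + (2 * d)^-1 * b ^+ 2.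
  rewrite -subr_ge0 -(pmulr_rge0 _ (_ : 0 < 2 * d)); last by lra.
  suff -> : 2 * d * (d / 2 * a ^+ 2 + (2 * d)^-1 * b ^+ 2 - a * b) = (d * a - b) ^+ 2.
    exact: sqr_ge0.
  by field; rewrite gt_eqF.
have [d2 rho0] : 0 <= d / 2 /\ 0 <= (2 * d)^-1 by split; [lra | rewrite invr_ge0; lra].
apply: (@le_trans _ _ (\esum_(l in ~` F) ((d / 2)%:E * ((x l) ^+ 2)%:E
                                          + (2 * d)^-1%:E * ((z l) ^+ 2)%:E))%E).
  by apply: le_esum => l _; rewrite -!EFinM -EFinD lee_fin -sqr_normr -(sqr_normr (z l)).
rewrite esumD; try by move=> l _; rewrite -EFinM lee_fin mulr_ge0 ?sqr_ge0.
rewrite -!ge0_esumZl //; try by move=> l; rewrite lee_fin sqr_ge0.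
rewrite EFinD !EFinM; apply: leeD; apply: lee_wpmul2l; rewrite ?lee_fin //.
apply: le_trans (esum_setC_le _ (fun l => sqr_ge0 (x l))) _.
have r0 : 0 <= r := le_trans (l2norm_ge0 x) xr.
by rewrite -/(l2sq x) l2sqE // lee_fin ler_pXn2r ?nnegrE ?l2norm_ge0.
Qed.

End L2.

Lemma gamma_kappa_sqr_in01 {R : realType} {Lam : Type} {kappa : Lam -> R} {gamma : R} :
  (forall l, 0 < kappa l) -> (exists K, forall l, kappa l <= K) -> 0 < gamma ->
  gamma < (sup (range (fun l => kappa l ^+ 2)))^-1 ->
  forall l, 0 < gamma * kappa l ^+ 2 < 1.
Proof.
move=> kappa_gt0 [K kappa_le] gamma_gt0 gamma_lt l.
have k2 : 0 < kappa l ^+ 2 by rewrite exprn_gt0.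
rewrite mulr_gt0 //=; set S := range (fun l => kappa l ^+ 2).
have ubS : has_ubound S.
  exists (K ^+ 2) => _ [l' _ <-].
  by have := kappa_gt0 l'; have := kappa_le l'; nra.
have le_sup : kappa l ^+ 2 <= sup S by apply: ub_le_sup => //; exists l.
have S0 : 0 < sup S := lt_le_trans k2 le_sup.
have : gamma * sup S < 1 by rewrite -ltr_pdivlMr // div1r.
have : gamma * kappa l ^+ 2 <= gamma * sup S by rewrite ler_pM2l.
lra.
Qed.

Lemma norm_div_le {R : realFieldType} (k a b c : R) : 0 < k ->
  `|a| <= c * `|k * b| -> `|a / k| <= c * `|b|.
Proof.
move=> k0 h; rewrite normrM normrV ?unitfE ?gt_eqF // (gtr0_norm k0) ler_pdivrMr //.
by rewrite mulrAC -(gtr0_norm k0) -mulrA -normrM.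
Qed.

Section KappaProx.
Context {R : realType} {Lam : countType}.
Context {kappa : Lam -> R} {phi : R -> R -> R -> R} {s : R -> Lam -> R -> \bar R}
  {gamma : R}.
Hypothesis kappa_gt0 : forall l, 0 < kappa l.
Hypothesis weight_in01 : forall l, 0 < gamma * kappa l ^+ 2 < 1.
Hypothesis gamma_gt0 : 0 < gamma.
Hypothesis phi_filter : nl_reg_filter phi.
Hypothesis s_reg : forall a, 0 < a -> forall l,
  eproper (s a l) /\ econvex (s a l) /\ elsc (s a l) /\
  (forall x : R, (s a l 0%R <= s a l x)%E) /\ s a l 0%R = 0%E /\
  is_prox1 (s a l) (phi a (kappa l)).

(* [q] is the proximal point of [z |-> gamma s a l (kappa l z)] at [u]; the
   parameter [w] is the one of [prox_scaled_three_point]. *)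
Definition coord_prox a l u q := exists w,
  kappa l * u = blend (phi a (kappa l)) (gamma * kappa l ^+ 2) w /\
  q = phi a (kappa l) w / kappa l.

Lemma filter_mono {a} l : 0 < a -> forall x y, x <= y -> phi a (kappa l) x <= phi a (kappa l) y.
Proof. by move=> a0; have [] := phi_filter _ _ a0 (kappa_gt0 l). Qed.

Lemma filter_lip1 {a} l : 0 < a -> forall x y, `|phi a (kappa l) x - phi a (kappa l) y| <= `|x - y|.
Proof. by move=> a0; have [_ []] := phi_filter _ _ a0 (kappa_gt0 l). Qed.

Lemma filter0 {a} l : 0 < a -> phi a (kappa l) 0 = 0.
Proof. by move=> a0; have [_ [_ []]] := phi_filter _ _ a0 (kappa_gt0 l). Qed.

Lemma regularizer_ge0_at a l z : 0 < a -> (0 <= s a l z)%E.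
Proof. by move=> a0; have [_ [_ [_ [s_ge [s0 _]]]]] := s_reg _ a0 l; rewrite -s0. Qed.

Lemma coord_prox_exists {a} l u : 0 < a -> exists q, coord_prox a l u q.
Proof.
move=> a0; have [w hw] := blend_surj _ (filter_mono l a0) (filter_lip1 l a0)
  (filter0 l a0) _ (kappa l * u) (weight_in01 l).
by exists (phi a (kappa l) w / kappa l), w.
Qed.

Lemma coord_prox_three_point {a l u q} z : 0 < a -> coord_prox a l u q ->
  ((2^-1 * (u - q) ^+ 2)%:E + gamma%:E * s a l (kappa l * q)
     + (2^-1 * (z - q) ^+ 2)%:E
   <= (2^-1 * (u - z) ^+ 2)%:E + gamma%:E * s a l (kappa l * z))%E.
Proof.
move=> a0 [w [hw ->]]; have [_ [cvx [_ [s_ge [s0 pr]]]]] := s_reg _ a0 l.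
exact: prox_scaled_three_point s0 s_ge cvx pr _ _ _ _ z gamma_gt0 (kappa_gt0 l) hw.
Qed.

Lemma coord_prox_residualE a l u w :
  u - phi a (kappa l) w / kappa l = (kappa l * u - phi a (kappa l) w) / kappa l.
Proof. by field; rewrite gt_eqF. Qed.

Lemma coord_prox_norm_le {a l u q} : 0 < a -> coord_prox a l u q ->
  `|q| <= `|u| /\ `|u - q| <= `|u|.
Proof.
move=> a0 [w [hw ->]].
have [le_phi le_res] := blend_norm_bounds _ (filter_mono l a0) (filter_lip1 l a0)
  (filter0 l a0) _ w (weight_in01 l).
rewrite -hw in le_phi le_res; rewrite coord_prox_residualE -[`|u|]mul1r.
by split; apply: norm_div_le; rewrite ?mul1r.
Qed.

(* The residual at [u] with [|u| <= r] is controlled through [w] by the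
   residuals of the filter at the two points [+-r / (gamma kappa l)], which
   vanish as [a -> 0] by (F4). *)
Definition residual_bound a l r := gamma * kappa l *
  (`|r / (gamma * kappa l) - phi a (kappa l) (r / (gamma * kappa l))|
   + `|- (r / (gamma * kappa l)) - phi a (kappa l) (- (r / (gamma * kappa l)))|).

Lemma coord_prox_residual_le_bound {a l u q r} : 0 < a -> coord_prox a l u q ->
  0 <= r -> `|u| <= r -> `|u - q| <= residual_bound a l r.
Proof.
move=> a0 [w [hw ->]] r0 ur; have k0 := kappa_gt0 l.
have gk0 : 0 < gamma * kappa l by rewrite mulr_gt0.
set B := r / (gamma * kappa l).
have B0 : 0 <= B by rewrite divr_ge0 // ltW.
have blend_le : `|blend (phi a (kappa l)) (gamma * kappa l ^+ 2) w|
   <= gamma * kappa l ^+ 2 * B.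
  rewrite -hw normrM (gtr0_norm k0).
  have -> : gamma * kappa l ^+ 2 * B = kappa l * r by rewrite /B; field; rewrite !gt_eqF.
  by rewrite ler_pM2l.
have := blend_sub_phi_le_bound _ (filter_mono l a0) (filter_lip1 l a0) (filter0 l a0)
  _ _ w (weight_in01 l) B0 blend_le.
rewrite -hw => le_res.
rewrite coord_prox_residualE normrM normrV ?unitfE ?gt_eqF // (gtr0_norm k0).
rewrite ler_pdivrMr //; apply: le_trans le_res _.
by rewrite /residual_bound -/B le_eqVlt; apply/orP; left; apply/eqP; ring.
Qed.

Lemma residual_bound_cvg0 l r e : 0 < e -> \forall a \near 0^'+, residual_bound a l r <= e.
Proof.
move=> e0; have k0 := kappa_gt0 l.
have gk0 : 0 < gamma * kappa l by rewrite mulr_gt0.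
have [_ [_ [_ phi_cvg]]] := phi_filter _ _ ltr01 k0.
set B := r / (gamma * kappa l); set e' := e / (2 * (gamma * kappa l)).
have e'0 : 0 < e' by rewrite divr_gt0 // mulr_gt0.
have near_res x : \forall a \near 0^'+, `|x - phi a (kappa l) x| <= e'.
  by move: (phi_cvg x) => /cvgrPdist_le /(_ _ e'0).
apply: filterS2 (near_res B) (near_res (- B)) => a le1 le2.
rewrite /residual_bound -/B (_ : e = gamma * kappa l * (e' + e')).
  by rewrite ler_pM2l // lerD.
by rewrite /e'; field; rewrite !gt_eqF.
Qed.

Context {ell : R -> R}.
Hypothesis ell_in01 : forall a, 0 < a -> 0 < ell a < 1.

Lemma coord_prox_lipschitz {a l u1 u2 q1 q2} : 0 < a ->
  (forall x y, `|phi a (kappa l) x - phi a (kappa l) y|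
     <= gamma * kappa l ^+ 2 * ell a / (1 - ell a * (1 - gamma * kappa l ^+ 2)) * `|x - y|) ->
  coord_prox a l u1 q1 -> coord_prox a l u2 q2 -> `|q1 - q2| <= ell a * `|u1 - u2|.
Proof.
move=> a0 phi_lip [w1 [h1 ->]] [w2 [h2 ->]].
have := blend_lipschitz _ (filter_mono l a0) _ _ _ w1 w2 (weight_in01 l) (ell_in01 _ a0)
  phi_lip (lexx _).
rewrite -h1 -h2 -mulrBr -mulrBl; exact: norm_div_le.
Qed.

Lemma coord_prox_residual_le {a l u q C} : 0 < a -> 1 <= C ->
  (C <= (1 - ell a)^-1 -> forall x,
     gamma * kappa l ^+ 2 * (1 - C * (1 - ell a))
       / (1 - (1 - C * (1 - ell a)) * (1 - gamma * kappa l ^+ 2)) * `|x|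
     <= `|phi a (kappa l) x|) ->
  coord_prox a l u q -> `|u - q| <= C * (1 - ell a) * `|u|.
Proof.
move=> a0 C1 phi_low hq; have /andP[el0 el1] := ell_in01 _ a0.
have [C_le|C_gt] := leP C (1 - ell a)^-1; last first.
  have : 1 < C * (1 - ell a) by rewrite -ltr_pdivrMr ?div1r //; lra.
  have [_ res_le] := coord_prox_norm_le a0 hq.
  by have := normr_ge0 u; nra.
case: hq => w [hw ->].
have m0 : 0 <= 1 - C * (1 - ell a) by rewrite subr_ge0 -ler_pdivlMr ?div1r //; lra.
have m1 : 1 - C * (1 - ell a) < 1.
  suff : 0 < C * (1 - ell a) by lra.
  by apply: mulr_gt0; lra.
have := blend_sub_phi_le _ (filter_mono l a0) (filter_lip1 l a0) (filter0 l a0) _ _ w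
  (weight_in01 l) (introT andP (conj m0 m1)) (phi_low C_le).
rewrite -hw (_ : 1 - (1 - C * (1 - ell a)) = C * (1 - ell a)); last by ring.
by rewrite coord_prox_residualE; exact: norm_div_le.
Qed.

Definition coord_objective a (x : Lam -> R) l z :=
  ((2^-1 * (x l - z) ^+ 2)%:E + gamma%:E * s a l (kappa l * z))%E.

Lemma coord_objective_ge0 a x l z : 0 < a -> (0 <= coord_objective a x l z)%E.
Proof.
move=> a0; apply: adde_ge0; first by rewrite lee_fin mulr_ge0 ?invr_ge0 ?sqr_ge0.
by apply: mule_ge0; [rewrite lee_fin ltW | exact: regularizer_ge0_at].
Qed.

Lemma prox_objectiveE a x y : 0 < a -> in_l2 x -> in_l2 y ->
  ((2^-1 * l2norm (l2sub x y) ^+ 2)%:E + gamma%:E * kappa_reg s kappa a y)%E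
  = \esum_(l in [set: Lam]) coord_objective a x l (y l).
Proof.
move=> a0 hx hy; rewrite /coord_objective esumD; first last.
- by move=> l _; apply: mule_ge0; [rewrite lee_fin ltW | exact: regularizer_ge0_at].
- by move=> l _; rewrite lee_fin mulr_ge0 ?invr_ge0 ?sqr_ge0.
congr (_ + _)%E.
  rewrite EFinM -(l2sqE (in_l2_sub hx hy)) /l2sq ge0_esumZl ?invr_ge0 //.
  by move=> i; rewrite lee_fin sqr_ge0.
by rewrite /kappa_reg ge0_esumZl ?ltW // => i; exact: regularizer_ge0_at.
Qed.

Section CoordinatewiseMinimizer.
Context {a : R} {x q : Lam -> R}.
Hypotheses (a0 : 0 < a) (hx : in_l2 x) (hq : forall l, coord_prox a l (x l) (q l)).

Lemma coord_prox_in_l2 : in_l2 q.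
Proof.
apply: (in_l2_le (c := 1)) hx _ => // l; rewrite mul1r.
by have [] := coord_prox_norm_le a0 (hq l).
Qed.

Lemma coord_prox_objective_fin_num :
  \esum_(l in [set: Lam]) coord_objective a x l (q l) \is a fin_num.
Proof.
rewrite ge0_fin_numE; last by apply: esum_ge0 => l _; exact: coord_objective_ge0.
apply: (@le_lt_trans _ _ (2^-1%:E * l2sq x)%E); last first.
  by rewrite -(fineK (l2sq_fin_num hx)) -EFinM ltry.
rewrite /l2sq ge0_esumZl ?invr_ge0 //; last by move=> i; rewrite lee_fin sqr_ge0.
apply: le_esum => l _; have := coord_prox_three_point 0 a0 (hq l).
have [_ [_ [_ [_ [s0 _]]]]] := s_reg _ a0 l.
rewrite mulr0 s0 mule0 adde0 subr0 -EFinM => /(le_trans _); apply.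
by rewrite leeDl // lee_fin mulr_ge0 ?invr_ge0 ?sqr_ge0.
Qed.

Lemma coord_prox_objective_le p :
  (\esum_(l in [set: Lam]) coord_objective a x l (q l)
     + \esum_(l in [set: Lam]) (2^-1 * (p l - q l) ^+ 2)%:E
   <= \esum_(l in [set: Lam]) coord_objective a x l (p l))%E.
Proof.
rewrite -esumD => [||l _]; last by rewrite lee_fin mulr_ge0 ?invr_ge0 ?sqr_ge0.
  by apply: le_esum => l _; exact: coord_prox_three_point.
by move=> l _; exact: coord_objective_ge0.
Qed.

End CoordinatewiseMinimizer.

Lemma prox_exists {a} : 0 < a ->
  exists P, is_prox_l2 (fun y => (gamma%:E * kappa_reg s kappa a y)%E) P.
Proof.
move=> a0; have hq x l := coord_prox_exists l (x l) a0.
exists (fun x l => projT1 (cid (hq x l))) => x hx.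
have hqx l := projT2 (cid (hq x l)).
split => [|y hy]; first exact: coord_prox_in_l2 a0 hx hqx.
rewrite !prox_objectiveE //; last exact: coord_prox_in_l2 a0 hx hqx.
apply: le_trans (coord_prox_objective_le a0 hqx y); apply: leeDl.
by apply: esum_ge0 => l _; rewrite lee_fin mulr_ge0 ?invr_ge0 ?sqr_ge0.
Qed.

(* By the three-point inequality the objective exceeds its value at the
   coordinatewise proximal points by half the squared distance to them. *)
Lemma prox_coord_prox P a x : 0 < a ->
  is_prox_l2 (fun y => (gamma%:E * kappa_reg s kappa a y)%E) P -> in_l2 x ->
  forall l, coord_prox a l (x l) (P x l).
Proof.
move=> a0 HP hx.
have [q hq] := choice (fun l => coord_prox_exists l (x l) a0).
suff -> : P x = q by [].
have [hp minP] := HP x hx; have hq2 := coord_prox_in_l2 a0 hx hq.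
have := minP q hq2; rewrite !prox_objectiveE // => le_Pq.
set D := \esum_(l in [set: Lam]) (2^-1 * (P x l - q l) ^+ 2)%:E.
have D0 : (0 <= D)%E.
  by apply: esum_ge0 => l _; rewrite lee_fin mulr_ge0 ?invr_ge0 ?sqr_ge0.
have : (D <= 0)%E.
  rewrite -(leeD2lE _ _ (coord_prox_objective_fin_num a0 hx hq)) adde0.
  exact: le_trans (coord_prox_objective_le a0 hq _) le_Pq.
move=> D_le0; apply/funext => l; apply/eqP; rewrite -subr_eq0 -sqrf_eq0.
rewrite eq_le sqr_ge0 andbT -(pmulr_rle0 _ (_ : 0 < 2^-1)) // -lee_fin.
apply: le_trans D_le0; apply: esum_ge.
by exists [set l]; rewrite ?fsbig_set1 //; split => //; exact: finite_set1.
Qed.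

Section Admissible.
Hypothesis phi_lip_ell : forall a, 0 < a -> forall l x y,
  `|phi a (kappa l) x - phi a (kappa l) y|
    <= gamma * kappa l ^+ 2 * ell a / (1 - ell a * (1 - gamma * kappa l ^+ 2)) * `|x - y|.
Context {C : R}.
Hypothesis C_ge1 : 1 <= C.
Hypothesis phi_lower : forall a, 0 < a -> C <= (1 - ell a)^-1 -> forall l x,
  gamma * kappa l ^+ 2 * (1 - C * (1 - ell a))
    / (1 - (1 - C * (1 - ell a)) * (1 - gamma * kappa l ^+ 2)) * `|x|
  <= `|phi a (kappa l) x|.
Context {P : R -> (Lam -> R) -> (Lam -> R)}.
Hypothesis P_prox : forall a, 0 < a ->
  is_prox_l2 (fun y => (gamma%:E * kappa_reg s kappa a y)%E) (P a).

Lemma prox_in_l2 {a x} : 0 < a -> in_l2 x -> in_l2 (P a x).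
Proof. by move=> a0 hx; have [] := P_prox _ a0 x hx. Qed.

Lemma prox_coord {a x} l : 0 < a -> in_l2 x -> coord_prox a l (x l) (P a x l).
Proof. by move=> a0 hx; exact: prox_coord_prox a0 (P_prox _ a0) hx l. Qed.

Lemma den_range_in_l2 x : den_range P x -> in_l2 x.
Proof. by move=> [a [a0 [x0 [hx0 ->]]]]; exact: prox_in_l2. Qed.

Lemma prox_residual_le {a x r} l : 0 < a -> in_l2 x -> 0 <= r -> `|x l| <= r ->
  `|P a x l - x l| <= `|x l| /\ `|P a x l - x l| <= residual_bound a l r.
Proof.
move=> a0 hx r0 hr; have hq := prox_coord l a0 hx.
rewrite distrC; split; first by have [] := coord_prox_norm_le a0 hq.
exact: coord_prox_residual_le_bound a0 hq r0 hr.
Qed.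

Lemma lip_l2_prox_le a : 0 < a -> (0 <= lip_l2 (P a) <= (ell a)%:E)%E.
Proof.
move=> a0; have /andP[el0 el1] := ell_in01 _ a0; apply/andP; split.
  by apply: le_ereal_inf_tmp => _ [L [L0 _] <-]; rewrite lee_fin.
apply: ereal_inf_lbound; exists (ell a) => //; split => [|x y hx hy]; first exact: ltW.
apply: l2norm_le (ltW el0) (in_l2_sub hx hy) _ => l.
exact: coord_prox_lipschitz a0 (phi_lip_ell _ a0 l) (prox_coord l a0 hx) (prox_coord l a0 hy).
Qed.

Lemma prox_lip_lt1 a : 0 < a -> (lip_l2 (P a) < 1%:E)%E.
Proof.
move=> a0; have /andP[_ le_ell] := lip_l2_prox_le _ a0.
by apply: le_lt_trans le_ell _; rewrite lte_fin; have /andP[] := ell_in01 _ a0.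
Qed.

(* Coordinates in a finite set F converge by (F4); the tail outside F is
   small uniformly in [a] because [|P a x - x| <= |x|] coordinatewise. *)
Lemma prox_cvg_id x : den_range P x ->
  (fun a => l2norm (l2sub (P a x) x)) @ 0^'+ --> 0.
Proof.
move=> /den_range_in_l2 hx; apply/cvgr0Pnorm_le => e e0.
set r := l2norm x; have r0 : 0 <= r := l2norm_ge0 x.
have e2 : 0 < e ^+ 2 / 2 by rewrite divr_gt0 // exprn_gt0.
have [F finF tail_le] := esum_tail_le (fun l => sqr_ge0 (x l)) hx e2.
have near_head : \forall a \near 0^'+,
    (\sum_(l \in F) (`|x l| * residual_bound a l r)%:E <= (e ^+ 2 / 2)%:E)%E.
  exact: near_fsum_le finF (near_scale_le (fun l => normr_ge0 (x l))
    (fun l => residual_bound_cvg0 l r)) _ e2.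
apply: filterS2 near_head (@nbhs_right_gt R 0) => a head_le a0.
have coord_le l := prox_residual_le l a0 hx r0 (coord_le_l2norm _ l hx).
rewrite ger0_norm ?l2norm_ge0 //.
apply: l2norm_le_sqr; [exact: in_l2_sub (prox_in_l2 a0 hx) hx | exact: ltW |].
rewrite (_ : e ^+ 2 = e ^+ 2 / 2 + e ^+ 2 / 2); last by field.
apply: (esum_split_le _ finF) => [l | |]; first exact: sqr_ge0.
  apply: le_trans head_le; apply: lee_fsum => // l _; rewrite lee_fin /l2sub.
  have [le1 le2] := coord_le l; rewrite -sqr_normr expr2.
  by apply: le_trans (ler_wpM2r (normr_ge0 _) le1) _; rewrite ler_wpM2l.
apply: le_trans tail_le; apply: le_esum => l _; rewrite lee_fin /l2sub.
have [le1 _] := coord_le l; rewrite -(sqr_normr (P a x l - x l)) -(sqr_normr (x l)).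
by rewrite ler_pXn2r ?nnegrE ?normr_ge0.
Qed.

Lemma prox_inner_residual_near {z r e} : in_l2 z -> 0 <= r -> 0 < e ->
  \forall a \near 0^'+, forall x, in_l2 x -> l2norm x <= r ->
    `|l2inner (l2sub (P a x) x) z| <= e.
Proof.
move=> hz r0 e0; set d := e / (r ^+ 2 + 1).
have r1 : 0 < r ^+ 2 + 1 by have := sqr_ge0 r; lra.
have d0 : 0 < d by rewrite divr_gt0.
have eta0 : 0 < d * e / 2 by rewrite divr_gt0 // mulr_gt0.
have [F finF tail_le] := esum_tail_le (fun l => sqr_ge0 (z l)) hz eta0.
have e4 : 0 < e / 4 by rewrite divr_gt0.
have near_head : \forall a \near 0^'+,
    (\sum_(l \in F) (`|z l| * residual_bound a l r)%:E <= (e / 4)%:E)%E.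
  exact: near_fsum_le finF (near_scale_le (fun l => normr_ge0 (z l))
    (fun l => residual_bound_cvg0 l r)) _ e4.
apply: filterS2 near_head (@nbhs_right_gt R 0) => a head_le a0 x hx xr.
have coord_le l := prox_residual_le l a0 hx r0 (le_trans (coord_le_l2norm _ l hx) xr).
apply: l2inner_le.
apply: (@le_trans _ _ (e / 4 + (d / 2 * r ^+ 2 + (2 * d)^-1 * (d * e / 2)))%:E).
  apply: (esum_split_le _ finF) => [l | |]; first exact: normr_ge0.
    apply: le_trans head_le; apply: lee_fsum => // l _; rewrite lee_fin /l2sub.
    by have [_ le2] := coord_le l; rewrite normrM mulrC ler_wpM2l.
  apply: le_trans _ (esum_setC_mul_le hx xr d0 tail_le); apply: le_esum => l _.
  by have [le1 _] := coord_le l; rewrite lee_fin /l2sub normrM ler_wpM2r.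
rewrite lee_fin (_ : (2 * d)^-1 * (d * e / 2) = e / 4); last by field; rewrite gt_eqF.
have : d * r ^+ 2 <= e by rewrite /d mulrAC ler_pdivrMr //; nra.
lra.
Qed.

Lemma prox_residual_weak_cvg0 (B : set (Lam -> R)) : B `<=` den_range P -> B !=set0 ->
  (exists r : R, forall x, B x -> l2norm x <= r) ->
  forall z, in_l2 z ->
  (fun a => ereal_sup [set (l2inner (l2sub (P a x) x) z)%:E | x in B]) @ 0^'+ --> 0%E.
Proof.
move=> BE [x0 Bx0] [r Br] z hz.
have r0 : 0 <= r := le_trans (l2norm_ge0 x0) (Br x0 Bx0).
apply: cvge0_sandwich => e e0.
apply: filterS (prox_inner_residual_near hz r0 e0) => a inner_le.
have {}inner_le x : B x -> - e <= l2inner (l2sub (P a x) x) z <= e.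
  move=> Bx; rewrite -ler_norml; apply: inner_le; last exact: Br.
  exact: den_range_in_l2 (BE _ Bx).
apply/andP; split.
  apply: le_trans (ereal_sup_ubound _); last by exists x0.
  by rewrite lee_fin; have /andP[] := inner_le x0 Bx0.
by apply: ge_ereal_sup => _ [x Bx <-]; rewrite lee_fin; have /andP[] := inner_le x Bx.
Qed.

Lemma prox_residual_bounded x : den_range P x -> exists M : R, forall a, 0 < a ->
  l2norm (l2sub x (P a x)) / (1 - fine (lip_l2 (P a))) <= M.
Proof.
move=> /den_range_in_l2 hx; exists (C * l2norm x) => a a0.
have /andP[el0 el1] := ell_in01 _ a0.
have /andP[L0 L_le] := lip_l2_prox_le _ a0.
have Lfin : lip_l2 (P a) \is a fin_num by rewrite ge0_fin_numE // (le_lt_trans L_le) ?ltry.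
have L_le' : fine (lip_l2 (P a)) <= ell a by rewrite -lee_fin fineK.
have C0 : 0 <= C := le_trans ler01 C_ge1.
have res_le : l2norm (l2sub x (P a x)) <= C * (1 - ell a) * l2norm x.
  apply: (l2norm_le (mulr_ge0 C0 _) hx) => [|l]; first by lra.
  exact: coord_prox_residual_le a0 C_ge1 (fun C_le => phi_lower _ a0 C_le l) (prox_coord l a0 hx).
rewrite ler_pdivrMr; last by lra.
apply: le_trans res_le _; rewrite mulrAC.
by apply: ler_wpM2l; [rewrite mulr_ge0 ?l2norm_ge0 | lra].
Qed.

Lemma prox_admissible : admissible_denoisers P.
Proof.
split; first by move=> a a0 x; exact: prox_in_l2.
split; first exact: prox_lip_lt1.
split; first exact: prox_cvg_id.
split; first exact: prox_residual_weak_cvg0.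
exact: prox_residual_bounded.
Qed.

End Admissible.
End KappaProx.

Theorem lemma5p3 (R : realType) (Lam : countType)
  (kappa : Lam -> R) (phi : R -> R -> R -> R) (s : R -> Lam -> R -> \bar R)
  (gamma : R) (ell : R -> R) :
  (forall l, 0 < kappa l) ->
  (exists K : R, forall l, kappa l <= K) ->
  nl_reg_filter phi ->
  (forall a, 0 < a -> forall l,
     eproper (s a l) /\ econvex (s a l) /\ elsc (s a l) /\
     (forall x : R, (s a l 0%R <= s a l x)%E) /\ s a l 0%R = 0%E /\
     is_prox1 (s a l) (phi a (kappa l))) ->
  0 < gamma ->
  gamma < (sup (range (fun l => kappa l ^+ 2)))^-1 ->
  (forall a, 0 < a -> 0 < ell a < 1) ->
  (forall a, 0 < a -> forall l, forall x y,
     `|phi a (kappa l) x - phi a (kappa l) y|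
       <= gamma * kappa l ^+ 2 * ell a
          / (1 - ell a * (1 - gamma * kappa l ^+ 2)) * `|x - y|) ->
  (exists C : R, 1 <= C /\
     forall a, 0 < a -> C <= (1 - ell a)^-1 -> forall l x,
       gamma * kappa l ^+ 2 * (1 - C * (1 - ell a))
         / (1 - (1 - C * (1 - ell a)) * (1 - gamma * kappa l ^+ 2)) * `|x|
       <= `|phi a (kappa l) x|) ->
  (forall a, 0 < a -> exists P,
     is_prox_l2 (fun x => (gamma%:E * kappa_reg s kappa a x)%E) P) /\
  (forall P : R -> (Lam -> R) -> (Lam -> R),
     (forall a, 0 < a ->
        is_prox_l2 (fun x => (gamma%:E * kappa_reg s kappa a x)%E) (P a)) ->
     admissible_denoisers P).
Proof.
move=> kappa_gt0 kappa_bdd phi_filter s_reg gamma_gt0 gamma_lt ell_in01 phi_lip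
  [C [C_ge1 phi_lower]].
have weight_in01 := gamma_kappa_sqr_in01 kappa_gt0 kappa_bdd gamma_gt0 gamma_lt.
split=> [a a0 | P P_prox].
  exact: (prox_exists kappa_gt0 weight_in01 gamma_gt0 phi_filter s_reg a0).
exact: (prox_admissible kappa_gt0 weight_in01 gamma_gt0 phi_filter s_reg ell_in01
  phi_lip C_ge1 phi_lower P_prox).
Qed.
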